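(* Let $G=(V,E)$ be a nice graph and $J$ a good subset of $V$. Then there exists a $J$-covering family $\mathcal{C}$ such that $K_{\mathcal{C}}(e)\le5$ for all $e\in E\setminus E_{J,1}$ and $K_{\mathcal{C}}(e)=0$ for all $e\in E_{J,1}$.
   Context: All graphs are finite and simple. An edge is isolated if both its ends have degree $1$; a graph is nice if it has no isolated edges. For $J\subseteq V$: $E_{J,1}$ is the set of non-isolated edges of $G-J$; $E_{J,2}$ the isolated edges of $G-J$; $E_{J,3}$ the edges with exactly one end in $J$; $E_{J,4}$ the edges with both ends in $J$; $G_{J,3}=(V,E_{J,3})$, $G_{J,4}=(J,E_{J,4})$; $d_{G_{J,3}}(j)$ is the number of edges of $E_{J,3}$ at $j$. For $i\in V\setminus J$, if $N_{G_{J,3}}(i)=\{j\}$ then $i$ is a private neighbour of $j$. A set $J\subseteq V$ is a good subset if $J\ne\emptyset$ and: (J1) $G_{J,4}$ has maximum degree at most $1$; (J2) $G_{J,3}$ has no isolated edges; (J3) each $j\in J$ has at most one private neighbour; (J4) for each $e=\{j,j'\}\in E_{J,4}$ there is $i_e\in V\setminus J$ with $\{j,j'\}\subseteq N_{G_{J,3}}(i_e)$, neither $j$ nor $j'$ has a private neighbour, and $i_e\ne i_{e'}$ for distinct $e,e'\in E_{J,4}$; (J5) for every $e\in E_{J,2}$, each end vertex of $e$ has a neighbour in $J$. A subgraph family is a multiset of subgraphs of $G$. An $E_{J,2}$-covering family is a family $\{C_e:e\in E_{J,2}\}$ where each $C_e$ is an edge of $E_{J,3}$ sharing an end vertex with $e$.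 An $E_{J,3}$-covering family is a family $\mathcal{C}_{J,3}$ of paths in $G$, each with two distinct end vertices both in $J$, such that (i) for each pair of distinct $j,j'\in J$ the number of even-length paths in the family joining $j,j'$ is even and the number of odd-length ones is even; (ii) for each $j\in J$, $d_{\mathcal{C}_{J,3}}(j)\ge2d_{G_{J,3}}(j)$, where $d_{\mathcal{C}_{J,3}}(j)$ is the number of paths (with multiplicity) with end vertex $j$. An $E_{J,4}$-covering family is a family $\{C_e:e\in E_{J,4}\}$ where each $C_e$ is an odd-length closed walk containing $e$. A $J$-covering family is a union $\mathcal{C}=\mathcal{C}_{J,2}\cup\mathcal{C}_{J,3}\cup\mathcal{C}_{J,4}$ of an $E_{J,2}$-, $E_{J,3}$- and $E_{J,4}$-covering family. For a subgraph $H$, $K_H:E\to\{0,1\}$ is the indicator of $E(H)$; $K_{\mathcal{H}}=\sum_{H\in\mathcal{H}}K_H$ with multiplicity. *)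

(* A finite simple graph: vertex type V (a finType, the whole
   vertex set), adjacency adj : rel V, symmetric and irreflexive.
   Edges are 2-element vertex sets {u,v}. *)
From mathcomp Require Import all_boot.
Set Implicit Arguments. Unset Strict Implicit. Unset Printing Implicit Defensive.

Section Graph.
Variable V : finType.
Variable adj : rel V.

Definition edges : {set {set V}} :=
  [set f : {set V} | [exists u, exists v, adj u v && (f == [set u; v])]].

Definition degF (F : {set {set V}}) (x : V) : nat := #|[set f in F | x \in f]|.

Definition isolated (F : {set {set V}}) (f : {set V}) : bool :=
  (f \in F) && [forall x in f, degF F x == 1].

Definition nice : Prop := forall f, ~~ isolated edges f.

Variable J : {set V}.

Definition EGJ : {set {set V}} := [set f in edges | [disjoint f & J]].
Definition E1 : {set {set V}} := [set f in EGJ | ~~ isolated EGJ f].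
Definition E2 : {set {set V}} := [set f in EGJ | isolated EGJ f].
Definition E3 : {set {set V}} := [set f in edges | #|f :&: J| == 1].
Definition E4 : {set {set V}} := [set f in edges | f \subset J].

Definition N3 (i : V) : {set V} := [set j | [set i; j] \in E3].

Definition private_nb (j i : V) : bool := (i \notin J) && (N3 i == [set j]).

Definition good : Prop :=
  J != set0 /\
  [/\ forall j, j \in J -> degF E4 j <= 1,
      forall f, ~~ isolated E3 f,
      forall j, j \in J -> #|[set i | private_nb j i]| <= 1,
      exists ie : {set V} -> V,
                 (forall e, e \in E4 ->
                    [/\ ie e \notin J, e \subset N3 (ie e) &
                        forall j, j \in e -> forall i, ~~ private_nb j i])
                 /\ {in E4 &, injective ie}
    & forall e, e \in E2 -> forall v, v \in e ->
                 exists2 j, j \in J & adj v j].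

Definition walk_edges (p : seq V) : {set {set V}} :=
  [set f : {set V} | has (fun uv : V * V => f == [set uv.1; uv.2]) (zip p (behead p))].

(* closed walk p = [x0; ...; x_{k-1}] traversing x0 x1 ... x_{k-1} x0, k edges *)
Definition closed_walk_edges (p : seq V) : {set {set V}} :=
  if p is x :: s then walk_edges (x :: rcons s x) else set0.

Definition is_path (p : seq V) : bool :=
  if p is x :: s then path adj x s && uniq p else false.

Definition plen (p : seq V) : nat := (size p).-1.

Definition joins (p : seq V) (j j' : V) : bool :=
  if p is x :: s then ((x == j) && (last x s == j')) || ((x == j') && (last x s == j))
  else false.

Definition has_end (p : seq V) (j : V) : bool :=
  if p is x :: s then (x == j) || (last x s == j) else false.

Definition ends_in_J (p : seq V) : bool :=
  if p is x :: s then [&& x != last x s, x \in J & last x s \in J] else false.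

Definition dC (C3 : seq (seq V)) (j : V) : nat := count (fun p => has_end p j) C3.

Definition E2_covering (C2 : {set V} -> {set V}) : Prop :=
  forall e, e \in E2 -> C2 e \in E3 /\ (C2 e :&: e != set0).

Definition E3_covering (C3 : seq (seq V)) : Prop :=
  [/\ forall p, p \in C3 -> is_path p && ends_in_J p,
      forall j j', j \in J -> j' \in J -> j != j' ->
        ~~ odd (count (fun p => joins p j j' && ~~ odd (plen p)) C3) /\
        ~~ odd (count (fun p => joins p j j' && odd (plen p)) C3)
    & forall j, j \in J -> 2 * degF E3 j <= dC C3 j].

Definition E4_covering (C4 : {set V} -> seq V) : Prop :=
  forall e, e \in E4 ->
    [/\ C4 e != [::], cycle adj (C4 e), odd (size (C4 e)) & e \in closed_walk_edges (C4 e)].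

Definition J_covering C2 C3 C4 : Prop :=
  [/\ E2_covering C2, E3_covering C3 & E4_covering C4].

Definition KC (C2 : {set V} -> {set V}) (C3 : seq (seq V)) (C4 : {set V} -> seq V)
  (f : {set V}) : nat :=
  #|[set e in E2 | C2 e == f]| + count (fun p => f \in walk_edges p) C3
  + #|[set e in E4 | f \in closed_walk_edges (C4 e)]|.

End Graph.

(* The family is built explicitly from the data of a good subset:
   - C3 (the E_{J,3}-covering part): a vertex i outside J with at least two
     J-neighbours contributes its "fan", the paths a-i-b for cyclically
     consecutive J-neighbours a, b of i (a single such path when i has exactly
     two J-neighbours, neither with a private neighbour).  The list of all fans
     is taken twice, so every parity condition holds; a vertex j of J ends two
     fan paths at each non-private neighbour, and by (J2),(J3) the missing
     private neighbour is compensated by a neighbour that must end j twice.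
   - C4 (E_{J,4}): the triangle u v i_e on e = {u,v}, given by (J4).
   - C2 (E_{J,2}): an E_{J,3}-edge meeting e that is not "heavy", i.e. not a
     spoke of a triangle whose apex has three J-neighbours; (J5) and the
     injectivity of e |-> i_e show that such an edge exists.
   An edge {x,y} with x outside J and y in J thus gets at most 4 from C3 and
   at most 1 from each of C2 and C4, and the heaviness test prevents 6. *)

From mathcomp Require Import all_boot zify.
Set Implicit Arguments. Unset Strict Implicit. Unset Printing Implicit Defensive.

Section CyclicPairs.
Variable T : eqType.

Definition cyclic_pairs (s : seq T) : seq (T * T) := zip s (rot 1 s).

Lemma cyclic_pairs_mem s ab : ab \in cyclic_pairs s -> (ab.1 \in s) && (ab.2 \in s).
Proof.
move=> ab_s; apply/andP; split.
  by rewrite -(@unzip1_zip _ _ s (rot 1 s)) ?size_rot //; apply: map_f.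
by rewrite -(mem_rot 1) -(@unzip2_zip _ _ s (rot 1 s)) ?size_rot //; apply: map_f.
Qed.

Lemma zip_rcons_neq x0 t x : uniq (x0 :: t) -> x \notin t -> (t = [::] -> x0 != x) ->
  all (fun ab : T * T => ab.1 != ab.2) (zip (x0 :: t) (rcons t x)).
Proof.
elim: t x0 => [|y t IHt] x0 /= uniq_x0t x_t x0x; first by rewrite x0x.
move: uniq_x0t x_t; rewrite !inE !negb_or => /andP[/andP[x0y _] uniq_yt] /andP[xy x_t].
by rewrite x0y; apply: IHt => // t0; rewrite eq_sym.
Qed.

Lemma cyclic_pairs_neq s ab : uniq s -> 1 < size s -> ab \in cyclic_pairs s -> ab.1 != ab.2.
Proof.
case: s => [|x t] //= uniq_xt size_t; rewrite /cyclic_pairs rot1_cons => ab_s.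
have x_t : x \notin t by case/andP: uniq_xt.
have t_nonempty : t = [::] -> x != x by move=> t0; rewrite t0 in size_t.
by have /allP-> := zip_rcons_neq uniq_xt x_t t_nonempty.
Qed.

Lemma count_cyclic_pairs s x : uniq s -> 1 < size s ->
  count (fun ab : T * T => (ab.1 == x) || (ab.2 == x)) (cyclic_pairs s) = 2 * (x \in s).
Proof.
move=> uniq_s size_s.
pose first (ab : T * T) := ab.1 == x; pose second (ab : T * T) := ab.2 == x.
have no_loop : count (predI first second) (cyclic_pairs s) = 0.
  apply/eqP; rewrite -leqn0 leqNgt -has_count; apply/hasPn => ab ab_s.
  have := cyclic_pairs_neq uniq_s size_s ab_s.
  by apply: contraNN => /andP[/eqP -> /eqP ->].
have count_first : count first (cyclic_pairs s) = count_mem x s.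
  by rewrite -[in RHS](@unzip1_zip _ _ s (rot 1 s)) ?size_rot // count_map.
have count_second : count second (cyclic_pairs s) = count_mem x (rot 1 s).
  by rewrite -[in RHS](@unzip2_zip _ _ s (rot 1 s)) ?size_rot // count_map.
have := count_predUI first second (cyclic_pairs s).
rewrite no_loop addn0 count_first count_second => /= ->.
by rewrite !count_uniq_mem ?rot_uniq // mem_rot addnn -mul2n.
Qed.

End CyclicPairs.

Lemma set2_eq (T : finType) (x y z : T) : ([set x; y] == [set x; z]) = (y == z).
Proof.
apply/eqP/eqP => [/setP eq_xyz|-> //].
have /set2P[yx|//] : y \in [set x; z] by rewrite -eq_xyz set22.
by subst y; have /set2P[] : z \in [set x; x] by rewrite eq_xyz set22.
Qed.

Lemma set2_inj (T : finType) (x y z : T) : [set x; y] = [set x; z] -> y = z.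
Proof. by move/eqP; rewrite set2_eq => /eqP. Qed.

Lemma sum_le_shift (I : finType) (a b : I -> nat) (p q : I) :
  (forall i, a i + (i == q) <= b i + (i == p)) -> \sum_i a i <= \sum_i b i.
Proof.
move=> le_ab; have sum_eq1 (k : I) : \sum_i ((i == k) : nat) = 1.
  by rewrite (bigD1 k) //= eqxx big1 // => i /negbTE->.
have : \sum_i (a i + (i == q)) <= \sum_i (b i + (i == p)) by apply: leq_sum => i _.
by rewrite !big_split /= !sum_eq1 leq_add2r.
Qed.

Section JCovering.
Variables (V : finType) (adj : rel V).
Hypotheses (adj_sym : symmetric adj) (adj_irr : irreflexive adj).

Lemma adj_neq x y : adj x y -> x != y.
Proof. by apply: contraTneq => ->; rewrite adj_irr. Qed.

Lemma edgeP f : reflect (exists x y, adj x y /\ f = [set x; y]) (f \in edges adj).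
Proof.
rewrite inE; apply: (iffP existsP) => [[x /existsP[y /andP[xy /eqP->]]]|[x [y [xy ->]]]].
  by exists x, y.
by exists x; apply/existsP; exists y; rewrite xy eqxx.
Qed.

Lemma edgesP x y : ([set x; y] \in edges adj) = adj x y.
Proof.
apply/edgeP/idP => [[u [v [uv eq_uv]]]|xy]; last by exists x, y.
have /set2P[xu|xv] : x \in [set u; v] by rewrite -eq_uv set21.
  by rewrite {}xu in eq_uv *; rewrite (set2_inj eq_uv).
by rewrite {}xv [RHS]setUC in eq_uv *; rewrite (set2_inj eq_uv) adj_sym.
Qed.

Lemma edge_card2 f : f \in edges adj -> #|f| = 2.
Proof. by case/edgeP=> x [y [xy ->]]; rewrite cards2 adj_neq. Qed.

Lemma edge_neq0 f : f \in edges adj -> f != set0.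
Proof. by move/edge_card2; rewrite -card_gt0 => ->. Qed.

Variable J : {set V}.

Lemma cardI2 u v : u != v -> #|[set u; v] :&: J| = (u \in J) + (v \in J).
Proof.
move=> uv; rewrite setIUl cardsU.
have restrict w : [set w] :&: J = if w \in J then [set w] else set0.
  by case: ifP => wJ; apply/setP=> z; rewrite !inE; case: (z =P w) => [->|].
have disj : [set u] :&: [set v] = set0.
  by apply/setP=> z; rewrite !inE; apply: contraNF uv => /andP[/eqP<- /eqP<-].
rewrite !restrict; case: (u \in J); case: (v \in J);
  by rewrite ?cards1 ?cards0 ?disj ?set0I ?setI0 ?cards0.
Qed.

Lemma E3P f :
  reflect (exists x y, [/\ x \notin J, y \in J, adj x y & f = [set x; y]]) (f \in E3 adj J).
Proof.
rewrite inE; apply: (iffP andP) => [[/edgeP[u [v [uv ->]]]]|[x [y [xJ yJ xy ->]]]].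
  rewrite cardI2 ?adj_neq //; case uJ: (u \in J); case vJ: (v \in J) => //= _.
    by exists v, u; rewrite uJ vJ adj_sym setUC.
  by exists u, v; rewrite uJ vJ.
by rewrite edgesP xy cardI2 ?adj_neq // (negbTE xJ) yJ.
Qed.

Lemma N3E i j : (j \in N3 adj J i) = ([set i; j] \in E3 adj J).
Proof. by rewrite inE. Qed.

Lemma N3P i j : i \notin J -> (j \in N3 adj J i) = adj i j && (j \in J).
Proof.
move=> iJ; rewrite N3E inE edgesP; case: (boolP (adj i j)) => //= ij.
by rewrite cardI2 ?adj_neq // (negbTE iJ); case: (j \in J).
Qed.

Lemma N3C i j : (i \in N3 adj J j) = (j \in N3 adj J i).
Proof. by rewrite !N3E setUC. Qed.

Lemma N3_notJ j i : j \in J -> i \in N3 adj J j -> i \notin J.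
Proof.
move=> jJ; rewrite N3E inE edgesP => /andP[ji].
by rewrite cardI2 ?adj_neq // jJ; case: (i \in J).
Qed.

Lemma degF_E3 x : degF (E3 adj J) x = #|N3 adj J x|.
Proof.
rewrite /degF.
have -> : [set f in E3 adj J | x \in f] = (fun y => [set x; y]) @: N3 adj J x.
  apply/setP=> f; rewrite inE; apply/andP/imsetP => [[f_E3 xf]|[y y_N3 ->]].
    case/E3P: (f_E3) xf => u [v [_ _ _ eq_f]]; rewrite eq_f => /set2P[] ->.
      by exists v; rewrite // N3E -eq_f.
    by exists u; [rewrite N3E setUC -eq_f | rewrite setUC].
  by rewrite -N3E set21.
by rewrite card_imset // => y z; apply: set2_inj.
Qed.

Lemma in_spoke z x y : z \notin J -> y \in J -> z \in [set x; y] -> z = x.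
Proof. by move=> zJ yJ /set2P[//|zy]; rewrite zy yJ in zJ. Qed.

Lemma E4_sub e : e \in E4 adj J -> e \subset J.
Proof. by rewrite inE => /andP[]. Qed.

Lemma E4_edge e : e \in E4 adj J -> e \in edges adj.
Proof. by rewrite inE => /andP[]. Qed.

Definition near_private i := [exists j in N3 adj J i, exists p, private_nb adj J j p].

Definition full_fan i : seq (seq V) :=
  [seq [:: ab.1; i; ab.2] | ab <- cyclic_pairs (enum (N3 adj J i))].

(* The paths contributed by i: none if i is in J or has fewer than two
   J-neighbours, a single path if it has exactly two J-neighbours neither of
   which needs compensation for a private neighbour, the full fan otherwise. *)
Definition fan i : seq (seq V) :=
  if (i \in J) || (#|N3 adj J i| < 2) then [::]
  else if (#|N3 adj J i| == 2) && ~~ near_private i then take 1 (full_fan i)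
  else full_fan i.

Definition fan_paths : seq (seq V) := flatten [seq fan i | i <- enum V].

Definition C3 : seq (seq V) := fan_paths ++ fan_paths.

Lemma fan_mem i p : p \in fan i ->
  exists a b, [/\ i \notin J, a \in N3 adj J i, b \in N3 adj J i, a != b & p = [:: a; i; b]].
Proof.
rewrite /fan; case: ifP => // /norP[iJ]; rewrite -leqNgt cardE => size_N3.
have full p' : p' \in full_fan i -> exists a b,
    [/\ i \notin J, a \in N3 adj J i, b \in N3 adj J i, a != b & p' = [:: a; i; b]].
  case/mapP=> ab ab_N3 ->; exists ab.1, ab.2.
  have /andP[] := cyclic_pairs_mem ab_N3; rewrite !mem_enum => a_N3 b_N3.
  by rewrite a_N3 b_N3 (cyclic_pairs_neq (enum_uniq _) size_N3 ab_N3).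
by case: ifP => _ p_fan; apply: full => //; apply: mem_take p_fan.
Qed.

Lemma fan_paths_mem p : p \in fan_paths ->
  exists i a b, [/\ i \notin J, a \in N3 adj J i, b \in N3 adj J i, a != b & p = [:: a; i; b]].
Proof. by case/flattenP=> q /mapP[i _ ->] /fan_mem[a [b fan_p]]; exists i, a, b. Qed.

Lemma count_fan_paths (P : pred (seq V)) : count P fan_paths = \sum_i count P (fan i).
Proof. by rewrite count_flatten -map_comp sumnE big_map big_enum. Qed.

Definition fan_ends i j : nat := count (fun p => has_end p j) (fan i).

Lemma fan_endsE i j : fan_ends i j =
  if (i \in J) || (#|N3 adj J i| < 2) then 0
  else (j \in N3 adj J i) * (if (#|N3 adj J i| == 2) && ~~ near_private i then 1 else 2).
Proof.
rewrite /fan_ends /fan; case: ifP => // /norP[_]; rewrite -leqNgt => size_N3.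
case: ifP => [/andP[/eqP N3_2 _]|_]; last first.
  rewrite count_map (@eq_count _ _ (fun ab : V * V => (ab.1 == j) || (ab.2 == j))) //.
  by rewrite count_cyclic_pairs ?enum_uniq -?cardE // mem_enum mulnC.
rewrite -mem_enum; move: N3_2; rewrite cardE /full_fan.
by case: (enum _) => [|a [|b []]] //= _; rewrite !inE addn0 muln1 !(eq_sym j).
Qed.

Lemma fan_ends_le2 i j : fan_ends i j <= 2.
Proof. by rewrite fan_endsE; case: ifP => // _; case: (j \in _); case: ifP. Qed.

Lemma fan_ends_le1 i j : #|N3 adj J i| = 2 -> ~~ near_private i -> fan_ends i j <= 1.
Proof. by move=> N3_2 far; rewrite fan_endsE N3_2 far /=; case: ifP => // _; case: (j \in _). Qed.

Lemma fan_ends_pos i j : 0 < fan_ends i j -> 1 < #|N3 adj J i|.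
Proof. by rewrite fan_endsE; case: ifP => // /norP[_]; rewrite -leqNgt. Qed.

Lemma fan_ends_ge1 i j : i \notin J -> j \in N3 adj J i -> 1 < #|N3 adj J i| -> 1 <= fan_ends i j.
Proof.
by move=> iJ j_N3 size_N3; rewrite fan_endsE (negbTE iJ) [_ < 2]ltnNge size_N3 j_N3; case: ifP.
Qed.

Lemma fan_ends_ge2 i j : i \notin J -> j \in N3 adj J i -> 1 < #|N3 adj J i| ->
  (2 < #|N3 adj J i|) || near_private i -> 2 <= fan_ends i j.
Proof.
move=> iJ j_N3 size_N3 big_or_near.
rewrite fan_endsE (negbTE iJ) [_ < 2]ltnNge size_N3 j_N3 /= ifF ?mul1n //.
by case/orP: big_or_near => [/gtn_eqF->|->]; rewrite ?andbF.
Qed.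

Hypothesis J2 : forall f, ~~ isolated (E3 adj J) f.
Hypothesis J3 : forall j, j \in J -> #|[set i | private_nb adj J j i]| <= 1.

Lemma shared_neighbour j i : j \in J -> i \in N3 adj J j -> ~~ private_nb adj J j i ->
  [/\ i \notin J, j \in N3 adj J i & 1 < #|N3 adj J i|].
Proof.
move=> jJ i_N3 not_private; have iJ := N3_notJ jJ i_N3.
have j_N3 : j \in N3 adj J i by rewrite -N3C.
split => //; rewrite ltnNge; apply: contra not_private => small.
by rewrite /private_nb iJ eq_sym eqEcard sub1set j_N3 cards1.
Qed.

(* By (J2), a vertex of J with a private neighbour p has another neighbour. *)
Lemma private_partner j p : j \in J -> private_nb adj J j p -> exists2 i, i \in N3 adj J j & i != p.
Proof.
move=> jJ /andP[_ /eqP N3p].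
have p_N3 : p \in N3 adj J j by rewrite N3C N3p set11.
have := J2 [set p; j]; rewrite /isolated -N3E N3p set11 /= => /forall_inPn[z].
rewrite degF_E3 => /set2P[->|->]; first by rewrite N3p cards1.
have [/subsetPn[i i_N3 /set1P/eqP ip]|sub] := boolP (~~ (N3 adj J j \subset [set p])).
  by exists i.
have -> : N3 adj J j = [set p] by apply/eqP; rewrite eqEsubset (negbNE sub) sub1set p_N3.
by rewrite cards1.
Qed.

(* A private neighbour p contributes nothing, but then some other neighbour q
   is near_private and ends j twice, which makes up for p. *)
Lemma fan_ends_cover j : j \in J -> #|N3 adj J j| <= \sum_i fan_ends i j.
Proof.
move=> jJ; rewrite -sum1_card big_mkcond /=.
have nonprivate_end i : i \in N3 adj J j -> ~~ private_nb adj J j i -> 1 <= fan_ends i j.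
  by move=> i_N3 /(shared_neighbour jJ i_N3)[iJ j_N3 size_N3]; apply: fan_ends_ge1.
have [/existsP[p p_private]|no_private] := boolP [exists p, private_nb adj J j p]; last first.
  apply: leq_sum => i _; case: ifP => // i_N3; apply: nonprivate_end => //.
  by apply: contra no_private => i_private; apply/existsP; exists i.
have unique_private i : private_nb adj J j i -> i = p.
  by move=> i_private; apply: (card_le1_eqP (J3 jJ)); rewrite inE.
have [q q_N3 qp] := private_partner jJ p_private.
have q_nonprivate : ~~ private_nb adj J j q by apply: contra qp => /unique_private->.
have [qJ j_N3q size_q] := shared_neighbour jJ q_N3 q_nonprivate.
have q_double : 2 <= fan_ends q j.
  apply: fan_ends_ge2 => //; apply/orP; right; apply/exists_inP; exists j => //.
  by apply/existsP; exists p.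
apply: (@sum_le_shift _ _ _ p q) => i.
case: (eqVneq i p) => [->|ip].
  by rewrite [p == q]eq_sym (negbTE qp) addn0 addn1; case: ifP.
case: (eqVneq i q) => [->|iq]; first by rewrite q_N3 /= addn0.
rewrite /= !addn0; case: ifP => // i_N3; apply: nonprivate_end => //.
by apply: contra ip => /unique_private->.
Qed.

Lemma walk_edges3 (f : {set V}) (a i b : V) :
  (f \in walk_edges [:: a; i; b]) = (f == [set a; i]) || (f == [set i; b]).
Proof. by rewrite inE /= orbF. Qed.

Lemma fan_paths_E3 f p : p \in fan_paths -> f \in walk_edges p -> f \in E3 adj J.
Proof.
case/fan_paths_mem=> i [a [b [_ a_N3 b_N3 _ ->]]].
by rewrite walk_edges3 => /orP[] /eqP->; [rewrite setUC|]; rewrite -N3E.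
Qed.

Lemma count_fan_paths_spoke x y : x \notin J -> y \in J ->
  count (fun p => [set x; y] \in walk_edges p) fan_paths = fan_ends x y.
Proof.
move=> xJ yJ; rewrite count_fan_paths (bigD1 x) //= big1 ?addn0.
  apply: eq_in_count => p /fan_mem[a [b [_ _ _ _ ->]]].
  by rewrite walk_edges3 /= (setUC [set a]) !set2_eq !(eq_sym y).
move=> i ix; apply/eqP; rewrite -leqn0 leqNgt -has_count; apply/hasPn => p.
case/fan_mem=> a [b [iJ _ _ _ ->]]; rewrite walk_edges3.
apply/negP => /orP[] /eqP eq_xy.
  by rewrite (@in_spoke i x y) ?eqxx ?eq_xy ?set22 in ix.
by rewrite (@in_spoke i x y) ?eqxx ?eq_xy ?set21 in ix.
Qed.

(* C3 consists of paths between distinct J-vertices, every pair is joined an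
   even number of times (the list is doubled), and by fan_ends_cover the ends
   at j number at least 2 deg_{G_{J,3}}(j). *)
Lemma C3_covering : E3_covering adj J C3.
Proof.
split.
- move=> p; rewrite mem_cat orbb => /fan_paths_mem[i [a [b [iJ a_N3 b_N3 ab ->]]]].
  rewrite !N3P // in a_N3 b_N3; case/andP: a_N3 => ia aJ; case/andP: b_N3 => ib bJ.
  have ai : a != i by apply: contraNneq iJ => <-.
  have bi : b != i by apply: contraNneq iJ => <-.
  by rewrite /is_path /ends_in_J /= adj_sym ia ib ab aJ bJ !inE negb_or ai ab eq_sym bi.
- by move=> j j' _ _ _; rewrite !count_cat !addnn !odd_double.
- move=> j jJ; rewrite /dC count_cat addnn -mul2n leq_mul2l /= degF_E3 count_fan_paths.
  exact: fan_ends_cover.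
Qed.

Definition K3 (f : {set V}) : nat := count (fun p => f \in walk_edges p) C3.

Lemma K3_notE3 f : f \notin E3 adj J -> K3 f = 0.
Proof.
move=> fE3; apply/eqP; rewrite -leqn0 leqNgt -has_count; apply/hasPn => p.
by rewrite mem_cat orbb => p_fan; apply: contra fE3; apply: fan_paths_E3.
Qed.

Lemma K3_spoke x y : x \notin J -> y \in J -> K3 [set x; y] = 2 * fan_ends x y.
Proof. by move=> xJ yJ; rewrite /K3 count_cat count_fan_paths_spoke // addnn -mul2n. Qed.

Variable ie : {set V} -> V.
Hypothesis ie_spec : forall e, e \in E4 adj J ->
  [/\ ie e \notin J, e \subset N3 adj J (ie e)
    & forall j, j \in e -> forall i, ~~ private_nb adj J j i].
Hypothesis ie_inj : {in E4 adj J &, injective ie}.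

Definition triangle (e : {set V}) : seq V :=
  if [pick uv : V * V | adj uv.1 uv.2 && (e == [set uv.1; uv.2])] is Some uv
  then [:: uv.1; uv.2; ie e] else [::].

Lemma triangleP e : e \in E4 adj J ->
  exists u v, [/\ adj u v, e = [set u; v] & triangle e = [:: u; v; ie e]].
Proof.
move=> e_E4; rewrite /triangle; case: pickP => [[u v] /andP[uv /eqP eq_e]|none].
  by exists u, v.
case/edgeP: (E4_edge e_E4) => u [v [uv eq_e]].
by have := none (u, v); rewrite /= uv eq_e eqxx.
Qed.

Lemma closed_walk_edges3 (f : {set V}) (u v w : V) :
  (f \in closed_walk_edges [:: u; v; w]) =
  [|| f == [set u; v], f == [set v; w] | f == [set w; u]].
Proof. by rewrite inE /= orbF. Qed.

Lemma triangle_edgeP e f : e \in E4 adj J -> f \in closed_walk_edges (triangle e) ->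
  f = e \/ exists2 y, y \in e & f = [set ie e; y].
Proof.
case/triangleP=> u [v [_ eq_e ->]]; rewrite closed_walk_edges3 eq_e.
case/or3P=> /eqP->; first by left.
  by right; exists v; rewrite ?set22 // setUC.
by right; exists u; rewrite ?set21.
Qed.

(* By (J4), i_e is adjacent to both ends of e, so the triangle is an odd
   closed walk through e. *)
Lemma triangle_covering : E4_covering adj J triangle.
Proof.
move=> e e_E4; have [ieJ /subsetP e_N3 _] := ie_spec e_E4.
case: (triangleP e_E4) => u [v [uv eq_e ->]]; split => //; last first.
  by rewrite closed_walk_edges3 eq_e eqxx.
have u_e : u \in e by rewrite eq_e set21.
have v_e : v \in e by rewrite eq_e set22.
move: (e_N3 u u_e) (e_N3 v v_e); rewrite !N3P // => /andP[iu _] /andP[iv _].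
by rewrite /= uv adj_sym iv iu.
Qed.

Definition K4 (f : {set V}) : nat :=
  #|[set e in E4 adj J | f \in closed_walk_edges (triangle e)]|.

Lemma K4_notE3 f : f \notin E3 adj J -> K4 f <= (f \in E4 adj J).
Proof.
move=> fE3.
have only_e e : e \in E4 adj J -> f \in closed_walk_edges (triangle e) -> f = e.
  move=> e_E4 /(triangle_edgeP e_E4)[//|[y y_e eq_f]]; case/negP: fE3.
  by have [_ /subsetP e_N3 _] := ie_spec e_E4; rewrite eq_f -N3E e_N3.
case: (boolP (f \in E4 adj J)) => f_E4.
  apply/card_le1_eqP => e e'; rewrite [e \in _]inE [e' \in _]inE.
  by move=> /andP[e_E4 fe] /andP[e'_E4 fe']; rewrite -(only_e e e_E4 fe) -(only_e e' e'_E4 fe').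
rewrite leqn0 cards_eq0; apply/eqP/setP => e; rewrite [e \in _]inE in_set0.
by apply/negP => /andP[e_E4 /(only_e e e_E4) eq_f]; rewrite eq_f e_E4 in f_E4.
Qed.

Lemma spoke_triangle x y e : x \notin J -> e \in E4 adj J ->
  [set x; y] \in closed_walk_edges (triangle e) -> ie e = x /\ y \in e.
Proof.
move=> xJ e_E4 /(triangle_edgeP e_E4)[eq_e|[y' y'_e eq_xy]].
  by have := subsetP (E4_sub e_E4) x; rewrite -eq_e set21 (negbTE xJ) => /(_ isT).
have y'J := subsetP (E4_sub e_E4) _ y'_e.
have x_ie : x = ie e by apply: (in_spoke xJ y'J); rewrite -eq_xy set21.
by rewrite -x_ie in eq_xy *; rewrite (set2_inj eq_xy).
Qed.

(* By injectivity of e |-> i_e, an E_{J,3}-edge lies on at most one triangle. *)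
Lemma K4_spoke x y : x \notin J -> K4 [set x; y] <= 1 /\
  (0 < K4 [set x; y] -> exists2 e, e \in E4 adj J & ie e = x /\ y \in e).
Proof.
move=> xJ; split.
  apply/card_le1_eqP => e e'; rewrite [e \in _]inE [e' \in _]inE.
  move=> /andP[e_E4 /(spoke_triangle xJ e_E4)[ie_x _]].
  move=> /andP[e'_E4 /(spoke_triangle xJ e'_E4)[ie'_x _]].
  by apply: ie_inj; rewrite ?ie_x ?ie'_x.
rewrite card_gt0 => /set0Pn[e]; rewrite inE => /andP[e_E4 xy_e].
by exists e => //; apply: spoke_triangle.
Qed.

(* If an apex x = i_e ends a J-vertex twice in its fan, it has at least three
   J-neighbours: with exactly two they would form e, which by (J4) has no
   private neighbour, and the fan of x would be a single path. *)
Lemma triangle_apex_crowded x y e : e \in E4 adj J -> ie e = x -> fan_ends x y = 2 ->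
  2 < #|N3 adj J x|.
Proof.
move=> e_E4 ie_x two; have [_ e_N3 no_private] := ie_spec e_E4; rewrite ie_x in e_N3.
have size_N3 : 1 < #|N3 adj J x| by apply: (@fan_ends_pos x y); rewrite two.
rewrite ltn_neqAle size_N3 andbT; apply/negP => /eqP N3_2.
have eq_e : e = N3 adj J x by apply/eqP; rewrite eqEcard e_N3 -N3_2 edge_card2 ?E4_edge.
have far : ~~ near_private x.
  by apply/exists_inPn => j; rewrite -eq_e => j_e; apply/existsPn => p; apply: no_private.
by have := fan_ends_le1 y (esym N3_2) far; rewrite two.
Qed.

Hypothesis J5 : forall e, e \in E2 adj J -> forall v, v \in e -> exists2 j, j \in J & adj v j.

(* g is a spoke of a triangle whose apex has at least three J-neighbours; such
   an edge may already carry load 4 + 1 from C3 and C4. *)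
Definition heavy (g : {set V}) : bool :=
  [exists e in E4 adj J, [&& ie e \in g, g :&: e != set0 & 2 < #|N3 adj J (ie e)|]].

Definition repair (e : {set V}) : {set V} :=
  odflt set0 [pick g in E3 adj J | (g :&: e != set0) && ~~ heavy g].

Lemma heavy_apex u j e : u \notin J -> j \in J -> e \in E4 adj J -> ie e \in [set u; j] ->
  ie e = u.
Proof. by move=> uJ jJ e_E4; apply: in_spoke => //; have [] := ie_spec e_E4. Qed.

(* A vertex u outside J with a J-neighbour has a non-heavy spoke: if {u, j}
   is heavy via e, any J-neighbour of u outside e gives one, by injectivity. *)
Lemma light_spoke u j : u \notin J -> j \in N3 adj J u ->
  exists2 j', j' \in N3 adj J u & ~~ heavy [set u; j'].
Proof.
move=> uJ j_N3; have jJ : j \in J by move: j_N3; rewrite N3P // => /andP[].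
have [/exists_inP[e e_E4 /and3P[ie_uj _ crowded]]|light] := boolP (heavy [set u; j]); last first.
  by exists j.
have ie_u := heavy_apex uJ jJ e_E4 ie_uj; rewrite ie_u in crowded.
have /subsetPn[j' j'_N3 j'_e] : ~~ (N3 adj J u \subset e).
  apply: contraTN crowded => /subset_leq_card.
  by rewrite (edge_card2 (E4_edge e_E4)) -leqNgt.
have j'J : j' \in J by move: j'_N3; rewrite N3P // => /andP[].
exists j' => //; apply/exists_inPn => e' e'_E4; apply/negP => /and3P[ie'_uj' meet _].
have e'e : e' = e by apply: ie_inj; rewrite // ie_u (heavy_apex uJ j'J e'_E4 ie'_uj').
case/set0Pn: meet => z /setIP[/set2P[->|->]]; rewrite e'e; last by rewrite (negbTE j'_e).
by move/(subsetP (E4_sub e_E4)); rewrite (negbTE uJ).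
Qed.

Lemma repair_spec e g : repair e = g -> g != set0 ->
  [/\ g \in E3 adj J, g :&: e != set0 & ~~ heavy g].
Proof.
rewrite /repair; case: pickP => [g' /andP[g'_E3 /andP[meet light]]|_] /= <- //.
by rewrite eqxx.
Qed.

(* By (J5) an end u of e in E_{J,2} has a J-neighbour, hence a non-heavy
   spoke, which meets e; so repair always succeeds. *)
Lemma repair_covering : E2_covering adj J repair.
Proof.
move=> e e_E2; rewrite /repair; case: pickP => [g /andP[g_E3 /andP[meet _]]|none] //=.
move: (e_E2); rewrite inE => /andP[]; rewrite inE => /andP[/edgeP[u [w [_ eq_e]]] disj] _.
have u_e : u \in e by rewrite eq_e set21.
have uJ : u \notin J by rewrite (disjointFr disj u_e).
have [j jJ uj] := J5 e_E2 u_e.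
have j_N3 : j \in N3 adj J u by rewrite N3P // uj jJ.
have [j' j'_N3 light] := light_spoke uJ j_N3.
have := none [set u; j']; rewrite /= -N3E j'_N3 light andbT => /negbT/negP[].
by apply/set0Pn; exists u; rewrite inE set21 u_e.
Qed.

Definition K2 (f : {set V}) : nat := #|[set e in E2 adj J | repair e == f]|.

Lemma K2_eq0 f : f != set0 -> (f \notin E3 adj J) || heavy f -> K2 f = 0.
Proof.
move=> f0 unusable; apply/eqP; rewrite cards_eq0; apply/eqP/setP => e.
rewrite [e \in _]inE in_set0; apply/negP => /andP[_ /eqP /repair_spec/(_ f0)[f_E3 _ light]].
by rewrite f_E3 (negbTE light) in unusable.
Qed.

(* The end x outside J of a repairing edge has degree 1 in G - J, so it serves
   at most one isolated edge. *)
Lemma K2_spoke x y : x \notin J -> y \in J -> K2 [set x; y] <= 1.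
Proof.
move=> xJ yJ.
have star e : e \in E2 adj J -> repair e = [set x; y] ->
    [set g in EGJ adj J | x \in g] = [set e].
  move=> e_E2 rep; have xy0 : [set x; y] != set0 by apply/set0Pn; exists x; rewrite set21.
  have [_ /set0Pn[z /setIP[z_xy z_e]] _] := repair_spec rep xy0.
  move: e_E2; rewrite inE => /andP[e_EGJ /andP[_ /forall_inP isol]].
  have zJ : z \notin J by move: e_EGJ; rewrite inE => /andP[_ disj]; rewrite (disjointFr disj z_e).
  have x_e : x \in e by rewrite -(in_spoke zJ yJ z_xy).
  have /cards1P[g eq_g] := isol x x_e.
  have : e \in [set g0 in EGJ adj J | x \in g0] by rewrite inE e_EGJ x_e.
  by rewrite eq_g => /set1P->.
apply/card_le1_eqP => e e'; rewrite [e \in _]inE [e' \in _]inE.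
by move=> /andP[e_E2 /eqP rep] /andP[e'_E2 /eqP rep']; apply: set1_inj; rewrite -star // -star.
Qed.

(* The load bound on E_{J,3}: 1 + 2*1 + 1, or 1 + 2*2, or 0 + 2*2 + 1 when
   the edge is heavy. *)
Lemma load_spoke x y : x \notin J -> y \in J -> K2 [set x; y] + K3 [set x; y] + K4 [set x; y] <= 5.
Proof.
move=> xJ yJ; rewrite K3_spoke //.
have k2 := K2_spoke xJ yJ; have [k4 k4_apex] := K4_spoke y xJ.
have ends_le2 := fan_ends_le2 x y.
have [two|] := eqVneq (fan_ends x y) 2; last by lia.
have [k4_0|/k4_apex[e e_E4 [ie_x y_e]]] := posnP (K4 [set x; y]); first by lia.
have crowded := triangle_apex_crowded e_E4 ie_x two.
have heavy_xy : heavy [set x; y].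
  apply/exists_inP; exists e => //; rewrite ie_x set21 crowded andbT.
  by apply/set0Pn; exists y; rewrite inE set22 y_e.
have xy0 : [set x; y] != set0 by apply/set0Pn; exists x; rewrite set21.
by rewrite K2_eq0 ?heavy_xy ?orbT //; lia.
Qed.

Lemma KCE f : KC adj J repair C3 triangle f = K2 f + K3 f + K4 f.
Proof. by []. Qed.

Lemma KC_notE3 f : f \in edges adj -> f \notin E3 adj J ->
  KC adj J repair C3 triangle f <= (f \in E4 adj J).
Proof.
move=> f_edge fE3; rewrite KCE K2_eq0 ?edge_neq0 ?fE3 // K3_notE3 //.
exact: K4_notE3.
Qed.

Lemma KC_le5 f : f \in edges adj -> KC adj J repair C3 triangle f <= 5.
Proof.
move=> f_edge; have [/E3P[x [y [xJ yJ _ ->]]]|fE3] := boolP (f \in E3 adj J).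
  by rewrite KCE; apply: load_spoke.
by apply: leq_trans (KC_notE3 f_edge fE3) _; case: (_ \in _).
Qed.

(* Edges of G - J meet neither E_{J,3} nor E_{J,4}, so they carry no load. *)
Lemma KC_E1 f : f \in E1 adj J -> KC adj J repair C3 triangle f = 0.
Proof.
rewrite inE [f \in EGJ _ _]inE => /andP[/andP[f_edge disj] _].
have [z z_f] := set0Pn _ (edge_neq0 f_edge).
have zJ : z \notin J by rewrite (disjointFr disj z_f).
have fE3 : f \notin E3 adj J.
  by apply/E3P => -[x [y [_ yJ _ eq_f]]]; rewrite (disjointFr disj) // eq_f set22 in yJ.
have fE4 : f \notin E4 adj J by apply: contra zJ => /E4_sub/subsetP; apply.
by apply/eqP; rewrite -leqn0; apply: leq_trans (KC_notE3 f_edge fE3) _; rewrite (negbTE fE4).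
Qed.

Lemma J_covering_family : J_covering adj J repair C3 triangle.
Proof. by split; [apply: repair_covering | apply: C3_covering | apply: triangle_covering]. Qed.
End JCovering.

Theorem lemma4p2 (V : finType) (adj : rel V)
  (adj_sym : symmetric adj) (adj_irr : irreflexive adj) (J : {set V}) :
  nice adj -> good adj J ->
  exists (C2 : {set V} -> {set V}) (C3 : seq (seq V)) (C4 : {set V} -> seq V),
    [/\ J_covering adj J C2 C3 C4,
        (forall f, f \in edges adj -> f \notin E1 adj J -> KC adj J C2 C3 C4 f <= 5)
      & (forall f, f \in E1 adj J -> KC adj J C2 C3 C4 f = 0)].
Proof.
move=> _ [_ [_ J2 J3 [ie [ie_spec ie_inj]] J5]].
exists (repair adj J ie), (C3 adj J), (triangle adj ie); split.
- by apply: J_covering_family.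
- by move=> f f_edge _; apply: KC_le5.
- by move=> f f_E1; apply: KC_E1.
Qed.
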